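(* Let $n\ge0$ and $k\ge1$ be integers, $\mathcal{H}$ a separable infinite-dimensional complex Hilbert space with orthonormal basis $\{e_m\}_{m\ge0}$, and $T$ a bounded linear operator on $\mathcal{H}$ such that for some scalars $a_{ij}$ ($0\le i\le n+k$, $0\le j\le n$), $Te_j=\sum_{i=0}^{n+k}a_{ij}e_i$ for $0\le j\le n$ and $Te_j=e_{j+k}$ for $j\ge n+1$. Suppose the matrix $A_1=(a_{ij})_{0\le i,j\le n}$ is a contraction on $\mathbb{C}^{n+1}$ (no contractivity of $T$ itself is assumed). Then $T$ has no non-zero eigenvalue if and only if for every eigenvector $(h_0,\dots,h_n)$ of $A_1$ corresponding to a non-zero eigenvalue, there exists $l\in\{1,\dots,k\}$ with $\sum_{r=0}^{n}a_{n+l,r}h_r\neq0$. *)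

From mathcomp Require Import all_boot all_algebra.
From mathcomp Require Export complex.
From mathcomp Require Import reals topology normedtype sequences.
Import GRing.Theory Num.Theory numFieldNormedType.Exports.

Set Implicit Arguments.
Unset Strict Implicit.
Unset Printing Implicit Defensive.

Local Open Scope ring_scope.

Section L2.
Variable R : realType.
Local Notation C := R[i].

Definition sqmod (z : C) : R := complex.Re z ^+ 2 + complex.Im z ^+ 2.

(* The model of the separable infinite-dimensional complex Hilbert space:
   H = l^2(N), i.e. sequences x : nat -> C with sum |x_m|^2 < oo. *)
Definition in_l2 (x : nat -> C) : Prop := cvgn (series (fun m => sqmod (x m))).

Definition l2norm2 (x : nat -> C) : R := limn (series (fun m => sqmod (x m))).

Definition ebasis (j : nat) : nat -> C := fun m => (m == j)%:R.

(* T is a bounded linear operator on H = l^2 (its values outside l^2 are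
   irrelevant) *)
Definition bounded_linear_op (T : (nat -> C) -> (nat -> C)) : Prop :=
  [/\ (forall (c : C) x y, in_l2 x -> in_l2 y ->
         T (fun m => c * x m + y m) = (fun m => c * T x m + T y m)),
      (forall x, in_l2 x -> in_l2 (T x)) &
      (exists M : R, forall x, in_l2 x -> l2norm2 (T x) <= M * l2norm2 x)].

Definition op_eigenvalue (T : (nat -> C) -> (nat -> C)) (lam : C) : Prop :=
  exists x : nat -> C, [/\ in_l2 x, x <> (fun _ => 0) & T x = (fun m => lam * x m)].

Definition mx_contraction (n : nat) (A : 'M[C]_n) : Prop :=
  forall v : 'cV[C]_n,
    \sum_(i < n) sqmod ((A *m v) i 0) <= \sum_(i < n) sqmod (v i 0).

End L2.

(* Boundedness makes T act coordinatewise through its matrix: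
   (Tx)_m = (A x_head)_m [m <= n + k] + x_(m-k) [m > n + k], where
   x_head = (x_0, ..., x_n).

   For an eigenvector x of T with eigenvalue lam <> 0, x_head is therefore an
   eigenvector of A_1 (non-zero, as x is recovered from it when k > 0), and
   row n + l of A applied to x_head equals lam x_(n+l).  As lam x_(m+k) = x_m
   for m > n and |lam| <= 1 (A_1 is a contraction), |x_(n+l+pk)| >= |x_(n+l)|
   for all p, so square summability forces x_(n+l) = 0.  Conversely, an
   eigenvector of A_1 killed by the rows n+1, ..., n+k of A, extended by
   zeros, is an eigenvector of T. *)
From mathcomp Require Import all_boot all_order all_algebra.
From mathcomp Require Import complex.
From mathcomp Require Import boolp reals topology normedtype sequences.
From mathcomp Require Import ring zify.
Import Order.TTheory GRing.Theory Num.Theory numFieldNormedType.Exports.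

Set Implicit Arguments.
Unset Strict Implicit.
Unset Printing Implicit Defensive.

Local Open Scope classical_set_scope.
Local Open Scope ring_scope.

Section SquaredModulus.
Variable R : realType.
Local Notation C := R[i].

Lemma sqmod_ge0 (z : C) : 0 <= sqmod z.
Proof. by rewrite /sqmod addr_ge0 ?sqr_ge0. Qed.

Lemma sqmod0 : sqmod (0 : C) = 0.
Proof. by rewrite /sqmod /= expr0n /= addr0. Qed.

Lemma sqmodM (z w : C) : sqmod (z * w) = sqmod z * sqmod w.
Proof. by case: z => a b; case: w => c d; rewrite /sqmod /=; ring. Qed.

Lemma sqmod_eq0 (z : C) : (sqmod z == 0) = (z == 0).
Proof.
case: z => a b; rewrite /sqmod /= paddr_eq0 ?sqr_ge0 // !sqrf_eq0.
by apply/andP/eqP => [[/eqP-> /eqP->] | [-> ->]].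
Qed.

Lemma sqmod_gt0 (z : C) : z != 0 -> 0 < sqmod z.
Proof. by move=> z0; rewrite lt0r sqmod_ge0 andbT sqmod_eq0. Qed.

End SquaredModulus.

Section SquareSummable.
Variable R : realType.
Local Notation C := R[i].
Local Notation sqseries x := (series (fun m => sqmod (x m))).

Definition tail (N : nat) (x : nat -> C) : nat -> C :=
  fun m => if (N <= m)%N then x m else 0.

Lemma sqseriesE (x : nat -> C) N : sqseries x N = \sum_(0 <= m < N) sqmod (x m).
Proof. by rewrite seriesEnat. Qed.

Lemma sqseries_nondecreasing (x : nat -> C) : nondecreasing_seq (sqseries x).
Proof.
rewrite seriesEnat; apply: (@nondecreasing_series _ _ predT) => *; exact: sqmod_ge0.
Qed.

Lemma in_l2_bounded (x : nat -> C) (B : R) : (forall N, sqseries x N <= B) -> in_l2 x.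
Proof.
move=> xB; apply: nondecreasing_is_cvgn; first exact: sqseries_nondecreasing.
by exists B => _ [N _ <-].
Qed.

Lemma sqseries_le_l2norm2 (x : nat -> C) N : in_l2 x -> sqseries x N <= l2norm2 x.
Proof. by move=> x2; apply: nondecreasing_cvgn_le (sqseries_nondecreasing x) x2 N. Qed.

Lemma l2norm2_ge0 (x : nat -> C) : in_l2 x -> 0 <= l2norm2 x.
Proof. by move=> x2; apply: le_trans (sqseries_le_l2norm2 0 x2); rewrite sqseriesE big_geq. Qed.

Lemma sqmod_le_l2norm2 (x : nat -> C) m : in_l2 x -> sqmod (x m) <= l2norm2 x.
Proof.
move=> x2; apply: le_trans (sqseries_le_l2norm2 m.+1 x2).
by rewrite sqseriesE big_nat_recr //= lerDr sumr_ge0 // => i _; apply: sqmod_ge0.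
Qed.

Lemma in_l2_finite_support (x : nat -> C) P : (forall m, (P <= m)%N -> x m = 0) -> in_l2 x.
Proof.
move=> x0; apply: (@in_l2_bounded _ (\sum_(0 <= m < P) sqmod (x m))) => N.
rewrite sqseriesE; have [NP | PN] := leqP N P.
  by rewrite (big_cat_nat (leq0n N) NP) /= lerDl sumr_ge0 // => m _; apply: sqmod_ge0.
rewrite (big_cat_nat (leq0n P) (ltnW PN)) /= [X in _ + X]big_nat_cond [X in _ + X]big1 ?addr0 //.
by move=> m /andP[/andP[Pm _] _]; rewrite x0 // sqmod0.
Qed.

Lemma in_l2_ebasis j : in_l2 (ebasis R j).
Proof.
by apply: (@in_l2_finite_support _ j.+1) => m jm; rewrite /ebasis gtn_eqF.
Qed.

Lemma in_l2_tail N (x : nat -> C) : in_l2 x -> in_l2 (tail N x).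
Proof.
move=> x2; apply: (@in_l2_bounded _ (l2norm2 x)) => M.
apply: le_trans (sqseries_le_l2norm2 M x2); rewrite !sqseriesE.
by apply: ler_sum => m _; rewrite /tail; case: ifP; rewrite ?sqmod0 ?sqmod_ge0.
Qed.

Lemma tailS N (x : nat -> C) : tail N x = (fun m => x N * ebasis R N m + tail N.+1 x m).
Proof.
apply: funext => m; rewrite /tail /ebasis.
by case: ltngtP => [||->]; rewrite ?mulr0 ?mulr1 ?addr0 ?add0r.
Qed.

Lemma l2norm2_tail N (x : nat -> C) : in_l2 x ->
  l2norm2 (tail N x) <= l2norm2 x - sqseries x N.
Proof.
move=> x2; apply: limr_le; first exact: in_l2_tail.
apply: nearW => M /=; have [MN | NM] := leqP M N.
  rewrite sqseriesE big_nat_cond big1 ?subr_ge0 ?sqseries_le_l2norm2 //.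
  by move=> m /andP[/andP[_ mM] _]; rewrite /tail leqNgt (leq_trans mM MN) sqmod0.
apply: le_trans (_ : sqseries x M - sqseries x N <= _); last first.
  by rewrite lerB // sqseries_le_l2norm2.
rewrite !sqseriesE [X in X <= _](big_cat_nat (leq0n N) (ltnW NM)).
rewrite [X in _ <= X - _](big_cat_nat (leq0n N) (ltnW NM)) /= addrAC subrr add0r.
rewrite big_nat_cond big1 ?add0r; last first.
  by move=> m /andP[/andP[_ mN] _]; rewrite /tail leqNgt mN sqmod0.
by apply: ler_sum_nat => m /andP[Nm _]; rewrite /tail Nm.
Qed.

Lemma l2norm2_sub_sqseries_cvg0 (x : nat -> C) : in_l2 x ->
  (fun N => l2norm2 x - sqseries x N) @ \oo --> 0.
Proof. by move=> x2; rewrite -(subrr (l2norm2 x)); apply: cvgB => //; apply: cvg_cst. Qed.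

Lemma in_l2_backward_recursion (x : nat -> C) (lam : C) k m0 :
  in_l2 x -> (0 < k)%N -> sqmod lam <= 1 ->
  (forall m, (m0 <= m)%N -> lam * x (m + k)%N = x m) -> x m0 = 0.
Proof.
move=> x2 k0 lam1 rec; have [// | x0] := eqVneq (x m0) 0; exfalso.
have grow p : sqmod (x m0) <= sqmod (x (m0 + p * k)%N).
  elim: p => [|p IH]; first by rewrite mul0n addn0.
  apply: le_trans IH _; rewrite mulSnr addnA -[x (m0 + p * k)%N]rec ?leq_addr //.
  by rewrite sqmodM ler_piMl ?sqmod_ge0.
have [N _ small] := cvgr_lt _ (cvg_series_cvg_0 x2) _ (sqmod_gt0 x0).
have far : (N <= m0 + N * k)%N by nia.
by have := small _ far; rewrite /= ltNge grow.
Qed.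

End SquareSummable.

Arguments tail {R}.

Lemma mx_contraction_eigenvalue (R : realType) p (A : 'M[R[i]]_p) (lam : R[i])
    (h : 'cV[R[i]]_p) :
  mx_contraction A -> h != 0 -> A *m h = lam *: h -> sqmod lam <= 1.
Proof.
move=> contrA h0 eig_h.
have [i0 hi0] : exists i, h i 0 != 0.
  apply/not_existsP => hz; move/eqP: h0; apply; apply/matrixP => i j.
  by rewrite (ord1 j) mxE; apply/eqP/negPn/negP/hz.
have sum_gt0 : 0 < \sum_(i < p) sqmod (h i 0).
  rewrite (bigD1 i0) //= ltr_pwDl ?sqmod_gt0 // sumr_ge0 // => i _.
  exact: sqmod_ge0.
have := contrA h; rewrite eig_h.
under eq_bigr do rewrite mxE sqmodM.
by rewrite -mulr_sumr -[X in _ <= X]mul1r ler_pM2r.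
Qed.

Section BoundedOperator.
Variables (R : realType) (T : (nat -> R[i]) -> (nat -> R[i])).
Hypothesis T_bounded : bounded_linear_op T.
Local Notation sqseries x := (series (fun m => sqmod (x m))).

Lemma bounded_op_decomp x N m : in_l2 x ->
  T x m = \sum_(0 <= j < N) x j * T (ebasis R j) m + T (tail N x) m.
Proof.
case: T_bounded => linT _ _ x2; elim: N => [|N IH].
  by rewrite big_geq // add0r; congr (T _ m); apply: funext => p.
by rewrite IH big_nat_recr //= -addrA tailS linT //; [apply: in_l2_ebasis | apply: in_l2_tail].
Qed.

(* The coordinate of T (tail N x) is bounded by M times the tail norm, which
   tends to 0; it is constant once T e_j vanishes at m for j >= N. *)
Lemma bounded_op_coord x m N : in_l2 x ->
  (forall j, (N <= j)%N -> T (ebasis R j) m = 0) ->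
  T x m = \sum_(0 <= j < N) x j * T (ebasis R j) m.
Proof.
move=> x2 Te0; case: T_bounded => _ l2T [M boundT].
pose M' := Num.max M 0; have M'0 : 0 <= M' by rewrite le_max lexx orbT.
set d := T x m - \sum_(0 <= j < N) x j * T (ebasis R j) m.
have d_tail N' : (N <= N')%N -> d = T (tail N' x) m.
  move=> NN'; rewrite /d (bounded_op_decomp N' m x2) (big_cat_nat (leq0n N) NN') /=.
  have -> : \sum_(N <= j < N') x j * T (ebasis R j) m = 0.
    by rewrite big_nat_cond big1 // => j /andP[/andP[Nj _] _]; rewrite Te0 ?mulr0.
  by rewrite addr0 addrC addKr.
have d_le N' : (N <= N')%N -> sqmod d <= M' * (l2norm2 x - sqseries x N').
  move=> NN'; have t2 := in_l2_tail (N := N') x2; rewrite (d_tail N') //.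
  apply: le_trans (sqmod_le_l2norm2 m (l2T _ t2)) _.
  apply: le_trans (boundT _ t2) _; apply: le_trans (_ : M' * l2norm2 (tail N' x) <= _).
    by rewrite ler_wpM2r ?l2norm2_ge0 // le_max lexx.
  by rewrite ler_wpM2l ?l2norm2_tail.
have bound_cvg : (fun N' => M' * (l2norm2 x - sqseries x N')) @ \oo --> 0.
  by rewrite -(mulr0 M'); apply: cvgMr; apply: l2norm2_sub_sqseries_cvg0.
have : sqmod d <= 0.
  rewrite -(cvg_lim _ bound_cvg) //; apply: limr_ge; first by apply/cvg_ex; exists 0.
  by exists N => // p /= /d_le.
by move=> d_le0; apply/eqP; rewrite -subr_eq0 -/d -sqmod_eq0 eq_le d_le0 sqmod_ge0.
Qed.

End BoundedOperator.

Section BlockShift.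
Variables (R : realType) (n k : nat) (a : nat -> nat -> R[i]).
Variable T : (nat -> R[i]) -> (nat -> R[i]).
Hypothesis T_bounded : bounded_linear_op T.
Hypothesis T_low : forall j : nat, (j <= n)%N ->
  T (ebasis R j) = (fun i => \sum_(0 <= i' < n + k + 1) a i' j * ebasis R i' i).
Hypothesis T_high : forall j : nat, (n + 1 <= j)%N -> T (ebasis R j) = ebasis R (j + k).
Local Notation A1 := (\matrix_(i < n.+1, j < n.+1) a i j).

Definition head (x : nat -> R[i]) : 'cV[R[i]]_n.+1 := \col_(i < n.+1) x i.

Definition extend0 (h : 'cV[R[i]]_n.+1) : nat -> R[i] :=
  fun m => if (m < n.+1)%N then h (inord m) 0 else 0.

Lemma extend0_ord h (j : 'I_n.+1) : extend0 h j = h j 0.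
Proof. by rewrite /extend0 ltn_ord inord_val. Qed.

Lemma head_extend0 h : head (extend0 h) = h.
Proof. by apply/matrixP => i j; rewrite (ord1 j) mxE extend0_ord. Qed.

Lemma in_l2_extend0 h : in_l2 (extend0 h).
Proof. by apply: (@in_l2_finite_support _ _ n.+1) => m nm; rewrite /extend0 ltnNge nm. Qed.

Lemma T_ebasis j m : T (ebasis R j) m =
  if (j <= n)%N then (if (m < n + k + 1)%N then a m j else 0) else (m == j + k)%:R.
Proof.
case: ifP => jn; last by rewrite T_high ?addn1 // ltnNge jn.
rewrite T_low // /ebasis (eq_bigr (fun i => if i == m then a i j else 0)).
  by rewrite -big_mkcond big_nat1_eq.
by move=> i _; rewrite eq_sym; case: eqP; rewrite ?mulr1 ?mulr0.
Qed.

Lemma T_coord x m : in_l2 x -> T x m =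
  (if (m < n + k + 1)%N then \sum_(j < n.+1) a m j * x j else 0) +
  (if (n + 1 + k <= m)%N then x (m - k)%N else 0).
Proof.
move=> x2; rewrite (bounded_op_coord T_bounded (N := (m + n).+1) x2); last first.
  move=> j mj; rewrite T_ebasis ifF; last by lia.
  by rewrite (_ : m == j + k = false) //; apply/eqP; lia.
rewrite (big_cat_nat (_ : 0 <= n.+1)%N) //=; last by lia.
congr (_ + _).
  rewrite -(big_mkord xpredT (fun j => a m j * x j)); case: ifP => mnk.
    by apply: eq_big_nat => j jn; rewrite T_ebasis ifT ?mnk 1?mulrC //; lia.
  by rewrite big_nat_cond big1 // => j /andP[jn _]; rewrite T_ebasis ifT ?mnk ?mulr0 //; lia.
rewrite (eq_big_nat _ _ (F2 := fun j => if j == (m - k)%N then x j else 0)); last first.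
  move=> j jn; rewrite T_ebasis ifF; last by lia.
  by case: (m =P j + k) => mjk; case: eqP => mk; rewrite ?mulr1 ?mulr0 //; lia.
rewrite -big_mkcond big_nat1_eq; case: ifP; case: ifP => //; lia.
Qed.

Section Eigenvector.
Variables (lam : R[i]) (x : nat -> R[i]).
Hypotheses (x2 : in_l2 x) (eig_x : T x = (fun m => lam * x m)).

Lemma eigen_coord m : lam * x m =
  (if (m < n + k + 1)%N then \sum_(j < n.+1) a m j * x j else 0) +
  (if (n + 1 + k <= m)%N then x (m - k)%N else 0).
Proof. by rewrite -T_coord // eig_x. Qed.

Lemma eigen_head : A1 *m head x = lam *: head x.
Proof.
apply/matrixP => i j; rewrite (ord1 j) !mxE eigen_coord.
rewrite ifT; last by have := ltn_ord i; lia.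
rewrite ifF; last by have := ltn_ord i; lia.
by rewrite addr0; apply: eq_bigr => r _; rewrite !mxE.
Qed.

Lemma eigen_row l : (1 <= l <= k)%N ->
  lam * x (n + l)%N = \sum_(r < n.+1) a (n + l)%N r * head x r 0.
Proof.
move=> /andP[l1 lk]; rewrite eigen_coord ifT; last by lia.
by rewrite ifF ?addr0; [apply: eq_bigr => r _; rewrite mxE | lia].
Qed.

Lemma eigen_shift m : (n < m)%N -> lam * x (m + k)%N = x m.
Proof. by move=> nm; rewrite eigen_coord ifF ?ifT ?add0r ?addnK //; lia. Qed.

(* lam x_m only involves coordinates of index < m outside the head (this uses
   k > 0), so strong induction on m applies. *)
Lemma eigen_head_eq0 : (0 < k)%N -> lam != 0 -> head x = 0 -> x = (fun _ => 0).
Proof.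
move=> k0 lam0 head0.
have x_head m : (m < n.+1)%N -> x m = 0.
  by move=> mn; have := congr1 (fun h : 'cV_n.+1 => h (inord m) 0) head0; rewrite !mxE inordK.
apply: funext => m; elim/ltn_ind: m => m IH.
have [mn | nm] := ltnP m n.+1; first exact: x_head.
have : lam * x m = 0.
  rewrite eigen_coord; have [mnk | nkm] := ltnP m (n + k + 1).
    by rewrite ifF ?addr0 ?big1 // => [r _ | ]; [rewrite x_head ?ltn_ord ?mulr0 | lia].
  by rewrite add0r ifT ?IH //; lia.
by move/eqP; rewrite mulf_eq0 (negPf lam0) => /eqP.
Qed.

Lemma eigen_row_eq0 l : (0 < k)%N -> sqmod lam <= 1 -> (1 <= l <= k)%N ->
  \sum_(r < n.+1) a (n + l)%N r * head x r 0 = 0.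
Proof.
move=> k0 lam1 lk; rewrite -eigen_row // (@in_l2_backward_recursion _ x lam k) ?mulr0 //.
by move=> m lm; apply: eigen_shift; lia.
Qed.

End Eigenvector.

Lemma extend0_eigen lam h : A1 *m h = lam *: h ->
  (forall l, (1 <= l <= k)%N -> \sum_(r < n.+1) a (n + l)%N r * h r 0 = 0) ->
  T (extend0 h) = (fun m => lam * extend0 h m).
Proof.
move=> eig_h rows0; apply: funext => m; rewrite T_coord; last exact: in_l2_extend0.
under eq_bigr do rewrite extend0_ord.
rewrite /extend0; have [mn | nm] := ltnP m n.+1.
  rewrite ifT ?ifF ?addr0; [|lia|lia].
  have := congr1 (fun v : 'cV_n.+1 => v (inord m) 0) eig_h; rewrite !mxE => <-.
  by apply: eq_bigr => j _; rewrite !mxE inordK.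
rewrite mulr0; have [mnk | nkm] := ltnP m (n + k + 1).
  rewrite ifF ?addr0; last by lia.
  have -> : m = (n + (m - n))%N by lia.
  by rewrite rows0 //; lia.
by rewrite add0r ifT ?ifF //; lia.
Qed.

Lemma extend0_op_eigenvalue lam (h : 'cV[R[i]]_n.+1) : h != 0 -> A1 *m h = lam *: h ->
  (forall l, (1 <= l <= k)%N -> \sum_(r < n.+1) a (n + l)%N r * h r 0 = 0) ->
  op_eigenvalue T lam.
Proof.
move=> h0 eig_h rows0; exists (extend0 h); split; last exact: extend0_eigen.
  exact: in_l2_extend0.
move=> ext0; move/eqP: h0; apply; rewrite -(head_extend0 h) ext0.
by apply/matrixP => i j; rewrite !mxE.
Qed.

End BlockShift.

Theorem corollary4p2 (R : realType) (n k : nat) (hk : (1 <= k)%N)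
  (a : nat -> nat -> R[i]) (T : (nat -> R[i]) -> (nat -> R[i]))
  (hT : bounded_linear_op T)
  (hTlow : forall j : nat, (j <= n)%N ->
     T (ebasis R j) = (fun i => \sum_(0 <= i' < n + k + 1) a i' j * ebasis R i' i))
  (hThigh : forall j : nat, (n + 1 <= j)%N -> T (ebasis R j) = ebasis R (j + k))
  (hA1 : mx_contraction (\matrix_(i < n.+1, j < n.+1) a i j)) :
  (forall lam : R[i], lam != 0 -> ~ op_eigenvalue T lam) <->
  (forall (lam : R[i]) (h : 'cV[R[i]]_n.+1),
      lam != 0 -> h != 0 ->
      (\matrix_(i < n.+1, j < n.+1) a i j) *m h = lam *: h ->
      exists l : nat, [/\ (1 <= l)%N, (l <= k)%N &
        \sum_(r < n.+1) a (n + l)%N r * h r 0 != 0]).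
Proof.
split=> [no_eig lam h lam0 h0 eig_h | rows_ne0 lam lam0 [x [x2 x0 eig_x]]].
  apply: contrapT => rows_ne0; apply: (no_eig lam lam0).
  apply: (extend0_op_eigenvalue hT hTlow hThigh h0 eig_h) => l /andP[l1 lk].
  by apply/eqP/negPn/negP => row_ne0; apply: rows_ne0; exists l; split.
have eig_head := eigen_head hT hTlow hThigh x2 eig_x.
have head0 : head n x != 0.
  by apply/eqP => /(eigen_head_eq0 hT hTlow hThigh x2 eig_x hk lam0).
have lam1 := mx_contraction_eigenvalue hA1 head0 eig_head.
have [l [l1 lk]] := rows_ne0 lam _ lam0 head0 eig_head.
by rewrite (eigen_row_eq0 hT hTlow hThigh x2 eig_x hk lam1) ?l1 ?eqxx.
Qed.
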